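(* Every $x\in\mathscr X$ admits the continuous quadratic variation $\langle x\rangle_t=t$, $t\in[0,1]$, along the sequence of dyadic partitions $\mathbb T_n=\{k2^{-n}: k=0,\dots,2^n\}$, $n\ge1$.
   Context: The Faber--Schauder functions are $e_{0,0}(t):=(\min\{t,1-t\})^+$ and $e_{m,k}(t):=2^{-m/2}e_{0,0}(2^m t-k)$ for $t\in\mathbb R$, $m\ge1$, $k\in\mathbb Z$. $\mathscr X$ denotes the set of all functions $x\in C[0,1]$ of the form $x=\sum_{m=0}^\infty\sum_{k=0}^{2^m-1}\theta_{m,k}e_{m,k}$ (uniformly convergent series) with $\theta_{m,k}\in\{-1,+1\}$. For a partition $\mathbb T$ of $[0,1]$ and $t\in\mathbb T$, the successor $t'$ is $\min\{u\in\mathbb T:u>t\}$ if $t<1$ and $t'=1$ if $t=1$. For $x\in C[0,1]$ set $\langle x\rangle^n_t:=\sum_{s\in\mathbb T_n,\,s\le t}(x(s')-x(s))^2$. The function $x$ admits the continuous quadratic variation $\langle x\rangle$ along $(\mathbb T_n)$ if $\langle x\rangle_t:=\lim_{n\to\infty}\langle x\rangle^n_t$ exists for all $t\in[0,1]$ and $t\mapsto\langle x\rangle_t$ is continuous. *)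

From Stdlib Require Import Reals Lra.
From Coquelicot Require Import Coquelicot.
Open Scope R_scope.

Definition e00 (t : R) : R := Rmax 0 (Rmin t (1 - t)).

Definition schauder (m k : nat) (t : R) : R :=
  / sqrt (2 ^ m) * e00 (2 ^ m * t - INR k).

Definition schauder_partial (theta : nat -> nat -> R) (M : nat) (t : R) : R :=
  sum_f_R0 (fun m => sum_f_R0 (fun k => theta m k * schauder m k t) (2 ^ m - 1)%nat) M.

Definition continuous_on01 (f : R -> R) : Prop :=
  forall t, 0 <= t <= 1 -> forall eps, 0 < eps -> exists delta, 0 < delta /\
    forall s, 0 <= s <= 1 -> Rabs (s - t) < delta -> Rabs (f s - f t) < eps.

Definition in_X (x : R -> R) : Prop :=
  continuous_on01 x /\
  exists theta : nat -> nat -> R,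
    (forall m k, theta m k = 1 \/ theta m k = -1) /\
    (forall eps, 0 < eps -> exists N : nat, forall M : nat, (N <= M)%nat ->
       forall t, 0 <= t <= 1 -> Rabs (schauder_partial theta M t - x t) < eps).

(* A sequence of partitions of [0,1]: the n-th partition is
   {pts n 0 < pts n 1 < ... < pts n (card n)} with pts n 0 = 0, pts n (card n) = 1.
   The successor of pts n i is pts n (i+1) for i < card n, and 1 for i = card n. *)
Definition qv_n (pts : nat -> nat -> R) (card : nat -> nat) (x : R -> R)
  (n : nat) (t : R) : R :=
  sum_f_R0 (fun i =>
     if Rle_dec (pts n i) t
     then (x (pts n (Nat.min (S i) (card n))) - x (pts n i)) ^ 2
     else 0) (card n).

Definition has_cont_qv (pts : nat -> nat -> R) (card : nat -> nat)
  (x : R -> R) (q : R -> R) : Prop :=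
  (forall t, 0 <= t <= 1 -> is_lim_seq (fun n => qv_n pts card x n t) (q t)) /\
  continuous_on01 q.

Definition dyadic_pts (n k : nat) : R := INR k / 2 ^ n.
Definition dyadic_card (n : nat) : nat := (2 ^ n)%nat.

(* At a dyadic point of level n every Faber--Schauder function of level >= n
   vanishes, while those of lower level are affine between neighbouring points of
   level n.  Hence x at the midpoint of a dyadic interval of level n is the mean of
   its values at the endpoints plus c = theta_{n,j} 2^{-n/2} / 2, so an increment d
   of level n splits into the two increments d/2 + c and d/2 - c of level n+1,
   whose squares add up to d^2/2 + 2^{-(n+1)}.  The error
   E_n(J) = sum_{j<J} d_{n,j}^2 - J 2^{-n} is therefore halved from one level to
   the next, up to one squared increment of size O(2^{-n}); so E_n = O(n 2^{-n})
   uniformly in J, and choosing J 2^{-n} within 2^{-n} of t gives <x>^n_t -> t. *)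

From Stdlib Require Import Reals Lra Lia ZArith.
From Coquelicot Require Import Coquelicot.
Open Scope R_scope.

Lemma e00_IZR (z : Z) : e00 (IZR z) = 0.
Proof.
  unfold e00, Rmax, Rmin.
  destruct (Z_le_gt_dec z 0) as [Hz | Hz].
  - apply IZR_le in Hz. repeat destruct Rle_dec; lra.
  - assert (H1 : (1 <= z)%Z) by lia. apply IZR_le in H1.
    repeat destruct Rle_dec; lra.
Qed.

Lemma e00_IZR_add_half (z : Z) :
  e00 (IZR z + / 2) = if Z.eq_dec z 0 then / 2 else 0.
Proof.
  unfold e00, Rmax, Rmin.
  destruct (Z.eq_dec z 0) as [-> | Hz]; [repeat destruct Rle_dec; lra |].
  destruct (Z_le_gt_dec z 0) as [Hneg | Hpos].
  - assert (H1 : (z <= -1)%Z) by lia. apply IZR_le in H1.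
    repeat destruct Rle_dec; lra.
  - assert (H1 : (1 <= z)%Z) by lia. apply IZR_le in H1.
    repeat destruct Rle_dec; lra.
Qed.

(* [e00] is affine away from its kinks [0], [1/2] and [1]. *)
Lemma e00_midpoint (u v : R) : u <= v ->
  v <= 0 \/ (0 <= u /\ v <= / 2) \/ (/ 2 <= u /\ v <= 1) \/ 1 <= u ->
  e00 ((u + v) / 2) = (e00 u + e00 v) / 2.
Proof. intros Huv Hpiece. unfold e00, Rmax, Rmin. repeat destruct Rle_dec; lra. Qed.

(* The kinks of [e00] lie on the grid of mesh [1/(2W)]. *)
Lemma e00_midpoint_grid (z W : Z) : (1 <= W)%Z ->
  e00 ((IZR z + / 2) / (2 * IZR W)) =
  (e00 (IZR z / (2 * IZR W)) + e00 (IZR (z + 1) / (2 * IZR W))) / 2.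
Proof.
  intros HW. apply IZR_le in HW.
  set (s := 2 * IZR W).
  assert (Hs : 0 < s) by (unfold s; lra).
  assert (Hle : forall a b, a <= b * s -> a / s <= b)
    by (intros a b Hab; apply Rle_div_l; lra).
  assert (Hge : forall a b, b * s <= a -> b <= a / s)
    by (intros a b Hab; apply Rle_div_r; lra).
  replace ((IZR z + / 2) / s) with ((IZR z / s + IZR (z + 1) / s) / 2)
    by (rewrite plus_IZR; field; lra).
  apply e00_midpoint.
  { apply Rmult_le_compat_r; [left; apply Rinv_0_lt_compat; lra | rewrite plus_IZR; lra]. }
  assert (Hcases : (z + 1 <= 0 \/ (0 <= z /\ z + 1 <= W) \/
                     (W <= z /\ z + 1 <= 2 * W) \/ 2 * W <= z)%Z) by lia.
  destruct Hcases as [H | [[H H'] | [[H H'] | H]]];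
    [left | right; left | right; right; left | right; right; right];
    repeat match goal with H : (_ <= _)%Z |- _ => apply IZR_le in H end;
    rewrite ?plus_IZR, ?mult_IZR in *;
    repeat split; first [apply Hle | apply Hge]; unfold s; lra.
Qed.

Lemma pow2_pos (n : nat) : 0 < 2 ^ n.
Proof. apply pow_lt; lra. Qed.

Lemma div_le_div_r (a b p : R) : 0 < p -> a <= b -> a / p <= b / p.
Proof. intros Hp Hab. apply Rmult_le_compat_r; [left; apply Rinv_0_lt_compat |]; lra. Qed.

Lemma inv_le_div (a p : R) : 0 < p -> 1 <= a -> / p <= a / p.
Proof. intros Hp Ha. rewrite <- (Rmult_1_l (/ p)). apply div_le_div_r; assumption. Qed.

Lemma schauder_dyadic_vanish (m n k a : nat) : (n <= m)%nat ->
  schauder m k (INR a / 2 ^ n) = 0.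
Proof.
  intros Hnm. unfold schauder.
  replace m with (n + (m - n))%nat by lia.
  assert (Hn := pow2_pos n).
  replace (2 ^ (n + (m - n)) * (INR a / 2 ^ n) - INR k)
    with (IZR (Z.of_nat a * 2 ^ Z.of_nat (m - n) - Z.of_nat k)).
  - rewrite e00_IZR. ring.
  - rewrite minus_IZR, mult_IZR, <- pow_IZR, <- !INR_IZR_INZ, pow_add.
    field. lra.
Qed.

(* On a dyadic interval of level [n > m], [2^m t - k] runs through an interval
   [[z/(2W), (z+1)/(2W)]] with [2W = 2^(n-m)] and [z] an integer. *)
Lemma schauder_dyadic_midpoint (m n k j : nat) : (m < n)%nat ->
  schauder m k (INR (2 * j + 1) / 2 ^ S n) =
  (schauder m k (INR j / 2 ^ n) + schauder m k (INR (S j) / 2 ^ n)) / 2.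
Proof.
  intros Hmn. unfold schauder.
  replace n with (m + S (n - m - 1))%nat by lia.
  set (p := (n - m - 1)%nat).
  set (W := (2 ^ Z.of_nat p)%Z).
  set (z := (Z.of_nat j - Z.of_nat k * 2 * W)%Z).
  assert (HW : (1 <= W)%Z).
  { assert (0 < W)%Z by (apply Z.pow_pos_nonneg; lia). lia. }
  assert (HWr : IZR W = 2 ^ p) by (unfold W; rewrite <- pow_IZR; reflexivity).
  assert (Hm := pow2_pos m). assert (Hp := pow2_pos p).
  assert (E1 : 2 ^ (m + S p) = 2 ^ m * (2 * 2 ^ p)) by (rewrite pow_add; reflexivity).
  assert (E2 : 2 ^ S (m + S p) = 2 ^ m * (2 * (2 * 2 ^ p)))
    by (change (2 ^ S (m + S p)) with (2 * 2 ^ (m + S p)); rewrite E1; ring).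
  replace (2 ^ m * (INR (2 * j + 1) / 2 ^ S (m + S p)) - INR k)
    with ((IZR z + / 2) / (2 * IZR W)).
  2:{ unfold z. rewrite minus_IZR, !mult_IZR, <- !INR_IZR_INZ, HWr, plus_INR, mult_INR, E2.
      simpl (INR 2). simpl (INR 1). field. lra. }
  replace (2 ^ m * (INR j / 2 ^ (m + S p)) - INR k) with (IZR z / (2 * IZR W)).
  2:{ unfold z. rewrite minus_IZR, !mult_IZR, <- !INR_IZR_INZ, HWr, E1. field. lra. }
  replace (2 ^ m * (INR (S j) / 2 ^ (m + S p)) - INR k) with (IZR (z + 1) / (2 * IZR W)).
  2:{ unfold z. rewrite plus_IZR, minus_IZR, !mult_IZR, <- !INR_IZR_INZ, HWr, S_INR, E1.
      field. lra. }
  rewrite e00_midpoint_grid by exact HW. field.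
  apply Rgt_not_eq, sqrt_lt_R0, Hm.
Qed.

Lemma schauder_dyadic_peak (n k j : nat) :
  schauder n k (INR (2 * j + 1) / 2 ^ S n) =
  if Nat.eq_dec k j then / sqrt (2 ^ n) / 2 else 0.
Proof.
  unfold schauder. assert (Hn := pow2_pos n).
  replace (2 ^ n * (INR (2 * j + 1) / 2 ^ S n) - INR k)
    with (IZR (Z.of_nat j - Z.of_nat k) + / 2).
  2:{ rewrite minus_IZR, <- !INR_IZR_INZ, plus_INR, mult_INR.
      simpl (INR 2). simpl (INR 1). simpl pow. field. lra. }
  rewrite e00_IZR_add_half.
  destruct (Z.eq_dec (Z.of_nat j - Z.of_nat k) 0), (Nat.eq_dec k j);
    try lia; unfold Rdiv; ring.
Qed.

Lemma sum_f_R0_indicator (f : nat -> R) (j N : nat) : (j <= N)%nat ->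
  sum_f_R0 (fun k => if Nat.eq_dec k j then f k else 0) N = f j.
Proof.
  induction N as [| N IH]; intros HjN.
  - replace j with 0%nat by lia. reflexivity.
  - rewrite tech5. destruct (Nat.eq_dec (S N) j) as [Hj | Hne].
    + subst j. rewrite sum_eq_R0; [ring |].
      intros k Hk. destruct (Nat.eq_dec k (S N)); [lia | reflexivity].
    + rewrite IH by lia. ring.
Qed.

Lemma sum_f_R0_mean (f g h : nat -> R) (N : nat) :
  (forall k, f k = (g k + h k) / 2) ->
  sum_f_R0 f N = (sum_f_R0 g N + sum_f_R0 h N) / 2.
Proof. intros Hf. induction N as [| N IH]; simpl; rewrite ?IH, Hf; field. Qed.

Definition schauder_level (theta : nat -> nat -> R) (m : nat) (t : R) : R :=
  sum_f_R0 (fun k => theta m k * schauder m k t) (2 ^ m - 1).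

(* [schauder_sum theta n] sums the levels [m < n]. *)
Fixpoint schauder_sum (theta : nat -> nat -> R) (n : nat) (t : R) : R :=
  match n with
  | O => 0
  | S n' => schauder_sum theta n' t + schauder_level theta n' t
  end.

Lemma schauder_partial_sum (theta : nat -> nat -> R) (M : nat) (t : R) :
  schauder_partial theta M t = schauder_sum theta (S M) t.
Proof.
  induction M as [| M IH].
  - unfold schauder_partial. simpl. unfold schauder_level. simpl. ring.
  - 
  change (schauder_partial theta M t + schauder_level theta (S M) t =
          schauder_sum theta (S (S M)) t).
  rewrite IH. reflexivity.
Qed.

Lemma schauder_level_dyadic_vanish (theta : nat -> nat -> R) (m n a : nat) : (n <= m)%nat ->
  schauder_level theta m (INR a / 2 ^ n) = 0.
Proof.
  intros Hnm. apply sum_eq_R0. intros k _.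
  rewrite schauder_dyadic_vanish by exact Hnm. ring.
Qed.

Lemma schauder_sum_dyadic_stable (theta : nat -> nat -> R) (n a M : nat) : (n <= M)%nat ->
  schauder_sum theta M (INR a / 2 ^ n) = schauder_sum theta n (INR a / 2 ^ n).
Proof.
  induction M as [| M IH]; intros HnM.
  - replace n with 0%nat by lia. reflexivity.
  - destruct (Nat.eq_dec n (S M)) as [-> | Hne]; [reflexivity |].
    simpl. rewrite IH, schauder_level_dyadic_vanish by lia. ring.
Qed.

Lemma schauder_level_dyadic_midpoint (theta : nat -> nat -> R) (m n j : nat) :
  (m < n)%nat ->
  schauder_level theta m (INR (2 * j + 1) / 2 ^ S n) =
  (schauder_level theta m (INR j / 2 ^ n) + schauder_level theta m (INR (S j) / 2 ^ n)) / 2.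
Proof.
  intros Hmn. apply sum_f_R0_mean. intros k.
  rewrite schauder_dyadic_midpoint by exact Hmn. field.
Qed.

Lemma schauder_sum_dyadic_midpoint (theta : nat -> nat -> R) (n j p : nat) : (p <= n)%nat ->
  schauder_sum theta p (INR (2 * j + 1) / 2 ^ S n) =
  (schauder_sum theta p (INR j / 2 ^ n) + schauder_sum theta p (INR (S j) / 2 ^ n)) / 2.
Proof.
  induction p as [| p IH]; intros Hpn; [simpl; field |].
  change (schauder_sum theta (S p) ?t)
    with (schauder_sum theta p t + schauder_level theta p t).
  rewrite IH, schauder_level_dyadic_midpoint by lia. field.
Qed.

Lemma schauder_level_dyadic_peak (theta : nat -> nat -> R) (n j : nat) : (j < 2 ^ n)%nat ->
  schauder_level theta n (INR (2 * j + 1) / 2 ^ S n) = theta n j / sqrt (2 ^ n) / 2.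
Proof.
  intros Hj. unfold schauder_level.
  rewrite (sum_eq _ (fun k => if Nat.eq_dec k j then theta n k / sqrt (2 ^ n) / 2 else 0)).
  - apply sum_f_R0_indicator. lia.
  - intros k _. rewrite schauder_dyadic_peak.
    destruct (Nat.eq_dec k j); unfold Rdiv; ring.
Qed.

Definition unif_cv01 (f : nat -> R -> R) (x : R -> R) : Prop :=
  forall eps, 0 < eps -> exists N : nat, forall M : nat, (N <= M)%nat ->
    forall t, 0 <= t <= 1 -> Rabs (f M t - x t) < eps.

Lemma unif_cv01_stationary (f : nat -> R -> R) (x : R -> R) (t y : R) (N : nat) :
  unif_cv01 f x -> 0 <= t <= 1 -> (forall M, (N <= M)%nat -> f M t = y) -> x t = y.
Proof.
  intros Hcv Ht Hy.
  destruct (Req_dec (x t) y) as [E | Hne]; [exact E | exfalso].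
  assert (Heps : 0 < Rabs (x t - y)) by (apply Rabs_pos_lt; lra).
  destruct (Hcv _ Heps) as [N' HN'].
  specialize (HN' (Nat.max N N') (Nat.le_max_r _ _) t Ht).
  rewrite Hy, Rabs_minus_sym in HN' by apply Nat.le_max_l. lra.
Qed.

Lemma dyadic_in01 (n a : nat) : (a <= 2 ^ n)%nat -> 0 <= INR a / 2 ^ n <= 1.
Proof.
  intros Ha. assert (Hn := pow2_pos n).
  apply le_INR in Ha. rewrite pow_INR in Ha. replace (INR 2) with 2 in Ha by (simpl; ring).
  split.
  - apply Rdiv_le_0_compat; [apply pos_INR | lra].
  - apply Rle_div_l; lra.
Qed.

Section SchauderSeries.

Variables (theta : nat -> nat -> R) (x : R -> R).
Hypothesis x_series : unif_cv01 (schauder_partial theta) x.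

Lemma schauder_series_dyadic (n a : nat) : (a <= 2 ^ n)%nat ->
  x (INR a / 2 ^ n) = schauder_sum theta n (INR a / 2 ^ n).
Proof.
  intros Ha. apply (unif_cv01_stationary _ _ _ _ n x_series (dyadic_in01 n a Ha)).
  intros M HM. rewrite schauder_partial_sum. apply schauder_sum_dyadic_stable. lia.
Qed.

Lemma schauder_series_dyadic_midpoint (n j : nat) : (j < 2 ^ n)%nat ->
  x (INR (2 * j + 1) / 2 ^ S n) =
  (x (INR j / 2 ^ n) + x (INR (S j) / 2 ^ n)) / 2 + theta n j / sqrt (2 ^ n) / 2.
Proof.
  intros Hj.
  rewrite !schauder_series_dyadic by (simpl; lia).
  change (schauder_sum theta (S n) ?t)
    with (schauder_sum theta n t + schauder_level theta n t).
  rewrite schauder_sum_dyadic_midpoint, schauder_level_dyadic_peak by lia. ring.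
Qed.

End SchauderSeries.

Fixpoint sum_lt (f : nat -> R) (J : nat) : R :=
  match J with
  | O => 0
  | S J' => sum_lt f J' + f J'
  end.

Definition dyadic_incr (x : R -> R) (n j : nat) : R :=
  x (INR (S j) / 2 ^ n) - x (INR j / 2 ^ n).

Lemma sum_lt_ext (f g : nat -> R) (J : nat) :
  (forall i, (i < J)%nat -> f i = g i) -> sum_lt f J = sum_lt g J.
Proof.
  induction J as [| J IH]; intros Hfg; [reflexivity |]. simpl.
  rewrite Hfg by lia. rewrite IH by (intros; apply Hfg; lia). reflexivity.
Qed.

Lemma sum_f_R0_le_threshold (a f : nat -> R) (t : R) (N : nat) :
  (forall i j, (i <= j)%nat -> a i <= a j) ->
  exists J, (J <= S N)%nat /\
    sum_f_R0 (fun i => if Rle_dec (a i) t then f i else 0) N = sum_lt f J /\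
    (forall i, (i < J)%nat -> a i <= t) /\ ((J <= N)%nat -> t < a J).
Proof.
  intros Ha. induction N as [| N IH].
  - simpl. destruct (Rle_dec (a 0%nat) t) as [H0 | H0].
    + exists 1%nat. repeat split; [lia | simpl; ring | | lia].
      intros i Hi. replace i with 0%nat by lia. exact H0.
    + exists 0%nat. repeat split; [lia | intros i Hi; lia | intros _; lra].
  - destruct IH as [J [HJ [Hsum [Hbelow Habove]]]].
    rewrite tech5, Hsum. destruct (Rle_dec (a (S N)) t) as [HSN | HSN].
    + assert (HJN : J = S N).
      { destruct (Nat.eq_dec J (S N)) as [E | Hne]; [exact E | exfalso].
        assert (t < a J) by (apply Habove; lia).
        assert (a J <= a (S N)) by (apply Ha; lia). lra. }
      subst J. exists (S (S N)). repeat split; [lia | | lia].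
      intros i Hi. assert (a i <= a (S N)) by (apply Ha; lia). lra.
    + exists J. repeat split; [lia | ring | exact Hbelow |].
      intros HJN. destruct (Nat.eq_dec J (S N)) as [-> | Hne]; [lra | apply Habove; lia].
Qed.

Lemma qv_n_dyadic (x : R -> R) (n : nat) (t : R) : 0 <= t <= 1 ->
  exists J, (J <= 2 ^ n)%nat /\
    qv_n dyadic_pts dyadic_card x n t = sum_lt (fun j => dyadic_incr x n j ^ 2) J /\
    Rabs (INR J / 2 ^ n - t) <= / 2 ^ n.
Proof.
  intros Ht.
  assert (Hn := pow2_pos n).
  set (sq_step := fun i =>
    (x (INR (Nat.min (S i) (2 ^ n)) / 2 ^ n) - x (INR i / 2 ^ n)) ^ 2).
  assert (Hqv : qv_n dyadic_pts dyadic_card x n t =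
    sum_f_R0 (fun i => if Rle_dec (INR i / 2 ^ n) t then sq_step i else 0) (2 ^ n))
    by reflexivity.
  assert (Hmono : forall i j, (i <= j)%nat -> INR i / 2 ^ n <= INR j / 2 ^ n)
    by (intros i j Hij; apply div_le_div_r, le_INR; assumption).
  destruct (sum_f_R0_le_threshold (fun i => INR i / 2 ^ n) sq_step t (2 ^ n) Hmono)
    as [J [HJ [Hsum [Hbelow Habove]]]].
  rewrite Hqv, Hsum.
  assert (Hincr : forall J', (J' <= 2 ^ n)%nat ->
     sum_lt sq_step J' = sum_lt (fun j => dyadic_incr x n j ^ 2) J').
  { intros J' HJ'. apply sum_lt_ext. intros i Hi.
    unfold sq_step. rewrite Nat.min_l by lia. reflexivity. }
  assert (HJ1 : (1 <= J)%nat).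
  { destruct J as [| J]; [exfalso | lia].
    assert (t < INR 0 / 2 ^ n) by (apply Habove; lia).
    simpl INR in *. unfold Rdiv in *. lra. }
  destruct (Nat.eq_dec J (S (2 ^ n))) as [-> | HJn].
  - (* past the last point the increment is [x 1 - x 1 = 0] *)
    exists (2 ^ n)%nat. split; [lia | split].
    + change (sum_lt sq_step (S (2 ^ n)))
        with (sum_lt sq_step (2 ^ n) + sq_step (2 ^ n)%nat).
      unfold sq_step at 2. rewrite Hincr, Nat.min_r, Rminus_diag by lia. ring.
    + assert (H1 : INR (2 ^ n) / 2 ^ n <= t) by (apply Hbelow; lia).
      assert (E : INR (2 ^ n) / 2 ^ n = 1)
        by (rewrite pow_INR; replace (INR 2) with 2 by (simpl; ring); field; lra).
      rewrite E in *.
      replace (1 - t) with 0 by lra. rewrite Rabs_R0. left; apply Rinv_0_lt_compat; lra.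
  - exists J. split; [lia | split; [apply Hincr; lia |]].
    assert (H1 : INR (J - 1) / 2 ^ n <= t) by (apply Hbelow; lia).
    assert (H2 : t < INR J / 2 ^ n) by (apply Habove; lia).
    rewrite minus_INR in H1 by lia.
    replace ((INR J - INR 1) / 2 ^ n) with (INR J / 2 ^ n - / 2 ^ n) in H1
      by (simpl; field; lra).
    apply Rabs_le. lra.
Qed.

Lemma dyadic_double (n j : nat) : INR (2 * j) / 2 ^ S n = INR j / 2 ^ n.
Proof.
  assert (Hn := pow2_pos n). rewrite mult_INR. simpl (INR 2). simpl pow. field. lra.
Qed.

Lemma sq_half_add_le (d b p K : R) : 0 < p -> 6 <= K ->
  d ^ 2 <= K / p -> b ^ 2 = / (4 * p) -> (d / 2 + b) ^ 2 <= K / (2 * p).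
Proof.
  intros Hp HK Hd Hb.
  apply Rle_div_r in Hd; [| exact Hp]. apply (Rle_div_r _ _ (2 * p)); [lra |].
  assert (Hbp : b ^ 2 * p = / 4) by (rewrite Hb; field; lra).
  assert (Hsq : 0 <= (d - 2 * b) ^ 2 * p) by (apply Rmult_le_pos; [apply pow2_ge_0 | lra]).
  nra.
Qed.

Lemma succ_sq_le_pow2 (n : nat) : (INR n + 1) ^ 2 <= 4 * 2 ^ n.
Proof.
  induction n as [| n IH]; [simpl; lra |].
  rewrite S_INR. simpl pow in *.
  destruct (le_lt_dec n 1) as [Hn | Hn].
  - destruct n as [| [| n]]; [simpl; nra | simpl; nra | lia].
  - assert (H2 : 2 <= INR n)
      by (replace 2 with (INR 2) by (simpl; ring); apply le_INR; lia).
    nra.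
Qed.

Lemma is_lim_seq_succ_div_pow2 : is_lim_seq (fun n => (INR n + 1) / 2 ^ n) 0.
Proof.
  apply (is_lim_seq_le_le (fun _ => 0) _ (fun n => 4 * / INR (S n))).
  - intros n. assert (Hn := pow2_pos n). assert (Hs := pos_INR n).
    split; [apply Rdiv_le_0_compat; lra |].
    rewrite S_INR. apply Rle_div_l; [lra |].
    assert (Hsq := succ_sq_le_pow2 n).
    apply (Rmult_le_reg_r (INR n + 1)); [lra |].
    replace (4 * / (INR n + 1) * 2 ^ n * (INR n + 1)) with (4 * 2 ^ n) by (field; lra).
    simpl pow in Hsq. lra.
  - apply is_lim_seq_const.
  - replace (Finite 0) with (Rbar_mult 4 0) by (simpl; f_equal; ring).
    apply is_lim_seq_scal_l.
    apply (is_lim_seq_incr_1 (fun n => / INR n) 0).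
    replace (Finite 0) with (Rbar_inv p_infty) by reflexivity.
    apply is_lim_seq_inv; [apply is_lim_seq_INR | discriminate].
Qed.

Lemma is_lim_seq_abs_le (u g : nat -> R) (l : R) :
  (forall n, Rabs (u n - l) <= g n) -> is_lim_seq g 0 -> is_lim_seq u l.
Proof.
  intros Hug Hg.
  apply (is_lim_seq_le_le (fun n => l - g n) _ (fun n => l + g n)).
  - intros n. specialize (Hug n). apply Rabs_le_between in Hug. lra.
  - replace (Finite l) with (Rbar_minus l 0) by (simpl; f_equal; ring).
    apply is_lim_seq_minus'; [apply is_lim_seq_const | exact Hg].
  - replace (Finite l) with (Rbar_plus l 0) by (simpl; f_equal; ring).
    apply is_lim_seq_plus'; [apply is_lim_seq_const | exact Hg].
Qed.

Section DyadicMidpoints.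

Variables (x : R -> R) (c : nat -> nat -> R).
Hypothesis x_midpoint : forall n j, (j < 2 ^ n)%nat ->
  x (INR (2 * j + 1) / 2 ^ S n) = (x (INR j / 2 ^ n) + x (INR (S j) / 2 ^ n)) / 2 + c n j.
Hypothesis c_sq : forall n j, c n j ^ 2 = / (4 * 2 ^ n).

Lemma dyadic_incr_even (n j : nat) : (j < 2 ^ n)%nat ->
  dyadic_incr x (S n) (2 * j) = dyadic_incr x n j / 2 + c n j.
Proof.
  intros Hj. unfold dyadic_incr. replace (S (2 * j)) with (2 * j + 1)%nat by lia.
  rewrite x_midpoint, dyadic_double by exact Hj. field.
Qed.

Lemma dyadic_incr_odd (n j : nat) : (j < 2 ^ n)%nat ->
  dyadic_incr x (S n) (2 * j + 1) = dyadic_incr x n j / 2 - c n j.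
Proof.
  intros Hj. unfold dyadic_incr. replace (S (2 * j + 1)) with (2 * S j)%nat by lia.
  rewrite x_midpoint, dyadic_double by exact Hj. field.
Qed.

Lemma dyadic_incr_children (n j : nat) : (j < 2 ^ n)%nat ->
  dyadic_incr x (S n) (2 * j) ^ 2 + dyadic_incr x (S n) (2 * j + 1) ^ 2 =
  dyadic_incr x n j ^ 2 / 2 + / 2 ^ S n.
Proof.
  intros Hj. assert (Hn := pow2_pos n).
  rewrite dyadic_incr_even, dyadic_incr_odd by exact Hj.
  replace (/ 2 ^ S n) with (2 * / (4 * 2 ^ n)) by (simpl; field; lra).
  rewrite <- (c_sq n j). field.
Qed.

Lemma dyadic_incr_parent (n j : nat) : (j < 2 ^ S n)%nat -> exists i b,
  (i < 2 ^ n)%nat /\ b ^ 2 = / (4 * 2 ^ n) /\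
  dyadic_incr x (S n) j = dyadic_incr x n i / 2 + b.
Proof.
  intros Hj. simpl in Hj.
  destruct (Nat.Even_or_Odd j) as [[i ->] | [i ->]].
  - exists i, (c n i). rewrite dyadic_incr_even by lia. repeat split; [lia | apply c_sq].
  - exists i, (- c n i). rewrite dyadic_incr_odd by lia.
    split; [lia | split]; [rewrite <- (c_sq n i); ring | reflexivity].
Qed.

(* [K >= 6] is what makes [d^2 <= K / 2^n] inductive, see [sq_half_add_le]. *)
Let K := Rmax 6 (dyadic_incr x 0 0 ^ 2).

Lemma dyadic_incr_sq_le (n j : nat) : (j < 2 ^ n)%nat -> dyadic_incr x n j ^ 2 <= K / 2 ^ n.
Proof.
  revert j. induction n as [| n IH]; intros j Hj.
  - simpl in Hj. replace j with 0%nat by lia.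
    replace (K / 2 ^ 0) with K by (simpl; field). apply Rmax_r.
  - destruct (dyadic_incr_parent n j Hj) as [i [b [Hi [Hb ->]]]].
    apply sq_half_add_le; [apply pow2_pos | apply Rmax_l | apply IH, Hi | exact Hb].
Qed.

Definition dyadic_qv_error (n J : nat) : R :=
  sum_lt (fun j => dyadic_incr x n j ^ 2) J - INR J / 2 ^ n.

Lemma sum_dyadic_incr_sq_double (n J : nat) : (J <= 2 ^ n)%nat ->
  sum_lt (fun j => dyadic_incr x (S n) j ^ 2) (2 * J) =
  sum_lt (fun j => dyadic_incr x n j ^ 2) J / 2 + INR J / 2 ^ S n.
Proof.
  assert (Hn := pow2_pos n).
  induction J as [| J IH]; intros HJ; [simpl; field; lra |].
  replace (2 * S J)%nat with (S (S (2 * J))) by lia.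
  change (sum_lt ?f (S (S ?a))) with (sum_lt f a + f a + f (S a)).
  change (sum_lt ?f (S J)) with (sum_lt f J + f J).
  replace (S (2 * J)) with (2 * J + 1)%nat by lia.
  rewrite Rplus_assoc, dyadic_incr_children, IH by lia.
  rewrite S_INR. simpl pow. field. lra.
Qed.

Lemma dyadic_qv_error_double (n J : nat) : (J <= 2 ^ n)%nat ->
  dyadic_qv_error (S n) (2 * J) = dyadic_qv_error n J / 2.
Proof.
  intros HJ. unfold dyadic_qv_error.
  rewrite sum_dyadic_incr_sq_double, dyadic_double by exact HJ.
  assert (Hn := pow2_pos n). simpl pow. field. lra.
Qed.

Lemma dyadic_qv_error_succ (n J : nat) :
  dyadic_qv_error n (S J) = dyadic_qv_error n J + dyadic_incr x n J ^ 2 - / 2 ^ n.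
Proof.
  unfold dyadic_qv_error. simpl sum_lt. rewrite S_INR. field. apply pow_nonzero. lra.
Qed.

Lemma dyadic_qv_error_bound (n J : nat) : (J <= 2 ^ n)%nat ->
  Rabs (dyadic_qv_error n J) <= (INR n + 1) * (K + 1) / 2 ^ n.
Proof.
  assert (HK : 6 <= K) by apply Rmax_l.
  revert J. induction n as [| n IH]; intros J HJ.
  - assert (Hd := dyadic_incr_sq_le 0 0 ltac:(simpl; lia)).
    assert (Hd0 := pow2_ge_0 (dyadic_incr x 0 0)).
    simpl in HJ. destruct J as [| [| J]]; [| | lia];
      unfold dyadic_qv_error; simpl sum_lt; simpl INR; simpl pow in *;
      apply Rabs_le; split; unfold Rdiv in *; rewrite ?Rinv_1 in *; lra.
  - assert (Hn := pow2_pos n).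
    replace ((INR (S n) + 1) * (K + 1) / 2 ^ S n)
      with ((INR n + 1) * (K + 1) / 2 ^ n / 2 + (K + 1) / 2 ^ S n)
      by (rewrite S_INR; simpl pow; field; lra).
    assert (Hstep : 0 < (K + 1) / 2 ^ S n)
      by (apply Rdiv_lt_0_compat; [lra | apply pow2_pos]).
    destruct (Nat.Even_or_Odd J) as [[i ->] | [i ->]].
    + rewrite dyadic_qv_error_double by (simpl in HJ; lia).
      assert (IHi := IH i ltac:(simpl in HJ; lia)). apply Rabs_le_between in IHi.
      apply Rabs_le. lra.
    + assert (Hi : (i < 2 ^ n)%nat) by (simpl in HJ; lia).
      rewrite Nat.add_1_r, dyadic_qv_error_succ, dyadic_qv_error_double by lia.
      assert (IHi := IH i ltac:(lia)). apply Rabs_le_between in IHi.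
      assert (Hd := dyadic_incr_sq_le (S n) (2 * i) ltac:(simpl; lia)).
      assert (Hd0 := pow2_ge_0 (dyadic_incr x (S n) (2 * i))).
      assert (Hinv : 0 < / 2 ^ S n) by (apply Rinv_0_lt_compat, pow2_pos).
      assert (HKn := div_le_div_r K (K + 1) _ (pow2_pos (S n)) ltac:(lra)).
      assert (H1n := inv_le_div (K + 1) _ (pow2_pos (S n)) ltac:(lra)).
      apply Rabs_le. lra.
Qed.

Lemma qv_n_dyadic_dist (n : nat) (t : R) : 0 <= t <= 1 ->
  Rabs (qv_n dyadic_pts dyadic_card x n t - t) <= (K + 2) * ((INR n + 1) / 2 ^ n).
Proof.
  intros Ht. destruct (qv_n_dyadic x n t Ht) as [J [HJ [-> HtJ]]].
  assert (HE := dyadic_qv_error_bound n J HJ).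
  assert (Hn := pow2_pos n). assert (Hs := pos_INR n).
  replace (sum_lt (fun j => dyadic_incr x n j ^ 2) J - t)
    with (dyadic_qv_error n J + (INR J / 2 ^ n - t)) by (unfold dyadic_qv_error; ring).
  eapply Rle_trans; [apply Rabs_triang |].
  assert (H1 := inv_le_div (INR n + 1) _ Hn ltac:(lra)).
  replace ((K + 2) * ((INR n + 1) / 2 ^ n))
    with ((INR n + 1) * (K + 1) / 2 ^ n + (INR n + 1) / 2 ^ n) by (field; lra).
  lra.
Qed.

Lemma qv_n_dyadic_cv (t : R) : 0 <= t <= 1 ->
  is_lim_seq (fun n => qv_n dyadic_pts dyadic_card x n t) t.
Proof.
  intros Ht. apply (is_lim_seq_abs_le _ _ _ (fun n => qv_n_dyadic_dist n t Ht)).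
  replace (Finite 0) with (Rbar_mult (K + 2) 0) by (simpl; f_equal; ring).
  apply is_lim_seq_scal_l, is_lim_seq_succ_div_pow2.
Qed.

End DyadicMidpoints.

Lemma continuous_on01_id : continuous_on01 (fun t => t).
Proof. intros t _ eps Heps. exists eps. split; [exact Heps | intros s _ Hs; exact Hs]. Qed.

Lemma sign_div_sqrt_sq (s : R) (n : nat) : s = 1 \/ s = -1 ->
  (s / sqrt (2 ^ n) / 2) ^ 2 = / (4 * 2 ^ n).
Proof.
  intros Hs. assert (Hn := pow2_pos n).
  assert (Hsqrt : 0 < sqrt (2 ^ n)) by (apply sqrt_lt_R0, Hn).
  replace ((s / sqrt (2 ^ n) / 2) ^ 2) with (s ^ 2 / (sqrt (2 ^ n) ^ 2 * 4))
    by (field; lra).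
  rewrite pow2_sqrt by lra.
  destruct Hs as [-> | ->]; field; lra.
Qed.

Theorem proposition2p6 (x : R -> R) :
  in_X x -> has_cont_qv dyadic_pts dyadic_card x (fun t => t).
Proof.
  intros [_ [theta [Htheta Hseries]]]. split; [| exact continuous_on01_id].
  apply (qv_n_dyadic_cv x (fun n j => theta n j / sqrt (2 ^ n) / 2)).
  - exact (schauder_series_dyadic_midpoint theta x Hseries).
  - intros n j. apply sign_div_sqrt_sq, Htheta.
Qed.
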